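(* Let $L\subset\mathbb R^3$ be a nonclosed $b$-chord-arc curve, let $0<\alpha<1$, $p>1/\alpha$, and let $f\in C(L)$. Suppose there is a constant $c>0$ such that for every $0<\delta\le 2|L|$ there exists a function $v_\delta$ harmonic in $\Omega_\delta$ satisfying $$\left(\int_L\left(\frac{\max\nolimits_{\delta}(f-v_{\delta})(M)}{\delta^{\alpha}}\right)^p\,dm_1(M)\right)^{1/p}\le c \quad\text{and}\quad \left(\int_L\left(\delta^{1-\alpha}\,\operatorname{grad}^{\ast}_{\delta} v_{\delta}(M)\right)^p\,dm_1(M)\right)^{1/p}\le c.$$ Then $f\in\Lambda^\alpha_p(L)$.
   Context: $L$ is a nonclosed curve in $\mathbb R^3$ with endpoints $A,B$; it is $b$-chord-arc ($b\ge1$) if for all distinct $M_1,M_2\in L$ the subarc $\gamma(M_1,M_2)\subset L$ with endpoints $M_1,M_2$ satisfies $|\gamma(M_1,M_2)|\le b\|M_1M_2\|$, where $|\cdot|$ denotes length. $|L|$ is the length of $L$ and $m_1$ is arc-length measure on $L$. $B_r(M)$, $\bar B_r(M)$ denote the open and closed balls of radius $r$ centered at $M$. For $f$ on $L$, $M\in L$, $r>0$: $\Delta^{\ast}f(M,r)=\sup_{N\in\bar B_r(M)\cap L}|f(N)-f(M)|$. $\Lambda^\alpha_p(L)$ is the set of functions $f$ on $L$ with $\sup_{0<r<|L|}\left(\int_L\left(\Delta^*f(M,r)/r^\alpha\right)^p dm_1(M)\right)^{1/p}<\infty$. $\Omega_\delta=\bigcup_{M\in L}B_\delta(M)$. For $v$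 harmonic in $\Omega_\delta$ and $M\in L$, $\operatorname{grad}^*_\delta v(M)=\max_{N\in\bar B_{\delta/2}(M)}|\operatorname{grad}v(N)|$. For a function $F$ on $L$, $\max_\delta F(M)=\sup_{N\in\bar B_\delta(M)\cap L}|F(N)|$; here applied to $F=f-v_\delta$ restricted to $L$. *)

From HB Require Import structures.
From mathcomp Require Import all_boot all_order all_algebra.
From mathcomp Require Import all_classical all_reals all_analysis.
Set Implicit Arguments. Unset Strict Implicit. Unset Printing Implicit Defensive.
Import Order.TTheory GRing.Theory Num.Theory.
Import numFieldNormedType.Exports.
Local Open Scope classical_set_scope.
Local Open Scope ring_scope.

Section Defs.
Variable R : realType.
Notation P3 := 'rV[R]_3.

(* Euclidean norm on R^3 (the library norm on 'rV is the max norm). *)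
Definition enorm (x : P3) : R := Num.sqrt (\sum_(i < 3) x ord0 i ^+ 2).

Definition oball (M : P3) (r : R) : set P3 := [set N | enorm (N - M) < r].
Definition cball (M : P3) (r : R) : set P3 := [set N | enorm (N - M) <= r].

Definition curve_length (g : R -> P3) (s t : R) : \bar R :=
  ereal_sup [set x | exists (n : nat) (u : nat -> R),
     [/\ u 0%N = s, u n = t, (forall k, (k < n)%N -> u k <= u k.+1) &
         x = (\sum_(k < n) enorm (g (u k.+1) - g (u k)))%:E]].

(* g : [0, l] -> R^3 is an arc-length parametrization of a nonclosed (Jordan)
   curve of length l > 0 *)
Definition arclength_arc (g : R -> P3) (l : R) : Prop :=
  [/\ 0 < l,
      {in `[0, l]%classic &, injective g} &
      forall s t, 0 <= s -> s <= t -> t <= l -> curve_length g s t = (t - s)%:E].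

Definition curve (g : R -> P3) (l : R) : set P3 := g @` `[0, l]%classic.

Definition chord_arc (g : R -> P3) (l b : R) : Prop :=
  forall s t, 0 <= s -> s <= t -> t <= l ->
    (curve_length g s t <= (b * enorm (g s - g t))%:E)%E.

(* integral over L with respect to arc-length measure m_1 *)
Definition int_L (g : R -> P3) (l : R) (F : P3 -> \bar R) : \bar R :=
  (\int[@lebesgue_measure R]_(s in `[0%R, l]%classic) F (g s))%E.

Definition Delta_star (g : R -> P3) (l : R) (f : P3 -> R) (M : P3) (r : R) : \bar R :=
  ereal_sup [set (`|f N - f M|)%:E | N in cball M r `&` curve g l].

Definition Lambda (g : R -> P3) (l alpha p : R) (f : P3 -> R) : Prop :=
  (ereal_sup [set poweR (int_L g l (fun M =>
       poweR (Delta_star g l f M r * ((r `^ alpha)^-1)%:E) p)) p^-1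
     | r in `]0%R, l[%classic] < +oo)%E.

Definition Omega (g : R -> P3) (l d : R) : set P3 :=
  \bigcup_(M in curve g l) oball M d.

Definition evec (i : 'I_3) : P3 := \row_j (i == j)%:R.
Definition partial (i : 'I_3) (v : P3 -> R) : P3 -> R := fun x => derive v x (evec i).
Definition grad (v : P3 -> R) (x : P3) : P3 := \row_i partial i v x.

Definition harmonic_on (U : set P3) (v : P3 -> R) : Prop :=
  [/\ forall x, U x -> differentiable v x,
      forall i x, U x -> differentiable (partial i v) x,
      forall i j, {within U, continuous (partial j (partial i v))} &
      forall x, U x -> \sum_(i < 3) partial i (partial i v) x = 0].

Definition grad_star (d : R) (v : P3 -> R) (M : P3) : \bar R :=
  ereal_sup [set (enorm (grad v N))%:E | N in cball M (d / 2)].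

Definition max_delta (g : R -> P3) (l d : R) (F : P3 -> R) (M : P3) : \bar R :=
  ereal_sup [set (`|F N|)%:E | N in cball M d `&` curve g l].

End Defs.

From HB Require Import structures.
From mathcomp Require Import all_boot all_order all_algebra.
From mathcomp Require Import all_classical all_reals all_analysis.
From mathcomp Require Import ring lra.
From mathcomp Require Import measurable_realfun.
Import Order.TTheory GRing.Theory Num.Theory.
Import numFieldNormedType.Exports.
Local Open Scope classical_set_scope.
Local Open Scope ring_scope.

(* Fix 0 < r < |L| and use the hypothesis with d = 2r.  For M, N on L with
   |N - M| <= r,
     |f N - f M| <= |(f - v) N| + |(f - v) M| + |v N - v M|;
   the first two terms are at most max_d (f - v) (M), and the mean value theorem
   on the segment [M, N], which lies in Omega_d, bounds the last one by
   r grad*_d v (M).  Dividing by r^alpha, raising to the power p and integrating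
   over L bounds the p-th power of the Lambda-norm at scale r by 8^p (c^p + c^p),
   uniformly in r.  The integrands are minorized by suprema over open balls,
   which are lower semicontinuous along L and hence measurable. *)

Section Euclid.
Context {R : realType}.
Notation P3 := 'rV[R]_3.
Implicit Types x y : P3.

Definition dot x y : R :=
  x ord0 0 * y ord0 0 + x ord0 1 * y ord0 1 + x ord0 2 * y ord0 2.

Lemma enormE x : enorm x = Num.sqrt (x ord0 0 ^+ 2 + x ord0 1 ^+ 2 + x ord0 2 ^+ 2).
Proof.
rewrite /enorm !big_ord_recr big_ord0 /= add0r.
by congr (Num.sqrt (x ord0 _ ^+ 2 + x ord0 _ ^+ 2 + x ord0 _ ^+ 2)); apply/val_inj.
Qed.

Lemma enorm_ge0 x : 0 <= enorm x.
Proof. exact: sqrtr_ge0. Qed.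

Lemma enorm0 : enorm (0 : P3) = 0.
Proof. by rewrite enormE !mxE expr0n /= !addr0 sqrtr0. Qed.

Lemma enorm_sq x : enorm x ^+ 2 = x ord0 0 ^+ 2 + x ord0 1 ^+ 2 + x ord0 2 ^+ 2.
Proof. by rewrite enormE sqr_sqrtr //; nra. Qed.

Lemma cauchy_schwarz x y : `|dot x y| <= enorm x * enorm y.
Proof.
rewrite /dot -sqrtr_sqr !enormE -sqrtrM; last nra.
rewrite ler_sqrt; last nra.
set a0 := x ord0 0; set a1 := x ord0 1; set a2 := x ord0 2.
set b0 := y ord0 0; set b1 := y ord0 1; set b2 := y ord0 2.
(* Lagrange's identity: the gap in Cauchy-Schwarz is this sum of squares *)
have : 0 <= (a0 * b1 - a1 * b0) ^+ 2 + (a0 * b2 - a2 * b0) ^+ 2 + (a1 * b2 - a2 * b1) ^+ 2.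
  by rewrite !addr_ge0 ?sqr_ge0.
nra.
Qed.

Lemma enormD x y : enorm (x + y) <= enorm x + enorm y.
Proof.
have hx := enorm_ge0 x; have hy := enorm_ge0 y.
have sqD : enorm (x + y) ^+ 2 = enorm x ^+ 2 + enorm y ^+ 2 + 2 * dot x y.
  by rewrite !enorm_sq /dot !mxE; ring.
have : enorm (x + y) ^+ 2 <= (enorm x + enorm y) ^+ 2.
  by rewrite sqD; have := ler_norm (dot x y); have := cauchy_schwarz x y; nra.
by rewrite -ler_sqrt ?sqrtr_sqr ?ger0_norm ?enorm_ge0 // ?addr_ge0 //; nra.
Qed.

Lemma enormZ (k : R) x : enorm (k *: x) = `|k| * enorm x.
Proof.
by rewrite !enormE !mxE -sqrtr_sqr -sqrtrM ?sqr_ge0 //; congr Num.sqrt; ring.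
Qed.

Lemma enorm_distC x y : enorm (x - y) = enorm (y - x).
Proof. by rewrite -opprB -scaleN1r enormZ normrN normr1 mul1r. Qed.

End Euclid.

Section Integral_nonmeasurable.
Local Open Scope ereal_scope.
Context d (T : measurableType d) (R : realType).
Variable mu : {measure set T -> \bar R}.

(* The integral of a nonnegative function is a supremum over the simple
   functions below it, so no measurability is needed. *)
Lemma ge0_le_integral_nonmeas (D : set T) (f1 f2 : T -> \bar R) :
  (forall x, D x -> 0 <= f1 x) -> (forall x, D x -> f1 x <= f2 x) ->
  \int[mu]_(x in D) f1 x <= \int[mu]_(x in D) f2 x.
Proof.
move=> f10 f12.
have f20 x : D x -> 0 <= f2 x by move=> Dx; exact: le_trans (f10 _ Dx) (f12 _ Dx).
rewrite !ge0_integralE //.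
apply: ge_ereal_sup => _ [h hf1 <-]; apply: ereal_sup_ubound; exists h => //= x.
exact: le_trans (hf1 x) (lee_restrict f12 _).
Qed.

End Integral_nonmeasurable.

Section Powers.
Context {R : realType}.

Lemma powR_le_8_sum (x y z p : R) : 0 <= x -> 0 <= y -> 0 <= z -> 0 < p ->
  z <= 4 * x + y -> z `^ p <= 8 `^ p * (x `^ p + y `^ p).
Proof.
move=> x0 y0 z0 p0 hz.
have mono u w : 0 <= u -> u <= w -> u `^ p <= w `^ p.
  by move=> u0 uw; apply: ge0_ler_powR; rewrite ?nnegrE ?(ltW p0) ?(le_trans u0).
have := powR_ge0 x p; have := powR_ge0 y p; have := powR_gt0 p (ltr0n R 8).
case: (lerP x y) => xy.
- have := mono z (8 * y) z0 ltac:(lra); rewrite powRM //; nra.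
- have := mono z (8 * x) z0 ltac:(lra); rewrite powRM //; nra.
Qed.

Lemma powR_double_le (r a : R) : 0 <= r -> 0 <= a <= 1 ->
  (2 * r) `^ a <= 2 * r `^ a.
Proof.
move=> r0 /andP[a0 a1]; rewrite powRM //.
have : 2 `^ a <= 2 :> R by apply: ler1_powR; lra.
have := powR_ge0 r a; nra.
Qed.

Lemma mul_invpowR_le (r a : R) : 0 < r -> a <= 1 ->
  r * (r `^ a)^-1 <= (2 * r) `^ (1 - a).
Proof.
move=> r0 a1.
have -> : r * (r `^ a)^-1 = r `^ (1 - a).
  by rewrite powRB ?powRr1 ?(ltW r0) // implybE (gt_eqF r0) orbT.
by apply: ge0_ler_powR; rewrite ?nnegrE; lra.
Qed.

Lemma powR_scaled_le (dl x y r alpha p : R) :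
  0 <= x -> 0 <= y -> 0 <= dl -> 0 < r -> 0 < alpha < 1 -> 0 < p ->
  dl <= 2 * x + r * y ->
  (dl * (r `^ alpha)^-1) `^ p
    <= 8 `^ p * ((x * ((2 * r) `^ alpha)^-1) `^ p + ((2 * r) `^ (1 - alpha) * y) `^ p).
Proof.
move=> x0 y0 dl0 r0 /andP[a0 a1] p0 hdl.
set kr := (r `^ alpha)^-1; set ka := ((2 * r) `^ alpha)^-1.
set kb := (2 * r) `^ (1 - alpha).
have kr0 : 0 < kr by rewrite invr_gt0 powR_gt0.
have hka : 2 * kr <= 4 * ka.
  have rA0 := powR_gt0 alpha r0.
  have : (2 * r `^ alpha)^-1 <= ka.
    rewrite lef_pV2 ?posrE ?powR_gt0 ?mulr_gt0 //.
    by rewrite powR_double_le ?(ltW r0) ?(ltW a0) ?(ltW a1).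
  by rewrite invfM -/kr; lra.
have hkb : r * kr <= kb by apply: mul_invpowR_le; lra.
apply: powR_le_8_sum; rewrite ?mulr_ge0 ?invr_ge0 ?powR_ge0 ?(ltW kr0) //.
have : dl * kr <= (2 * x + r * y) * kr by rewrite ler_pM2r.
nra.
Qed.

Local Open Scope ereal_scope.

Lemma lee_poweR (x y : \bar R) (p : R) : (0 <= p)%R -> 0 <= x -> x <= y ->
  poweR x p <= poweR y p.
Proof.
move=> p0 x0 xy; apply: gt0_ler_poweR => //.
- by rewrite in_itv /= x0 leey.
- by rewrite in_itv /= leey andbT (le_trans x0 xy).
Qed.

Lemma poweRV_le_powR (I : \bar R) (c p : R) : 0 <= I -> (0 < p)%R ->
  poweR I p^-1 <= c%:E -> I <= (c `^ p)%:E.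
Proof.
move=> I0 p0 h.
have -> : I = poweR (poweR I p^-1) p by rewrite -poweRrM mulVf ?gt_eqF // poweRe1.
by rewrite -poweR_EFin; apply: lee_poweR; rewrite ?poweR_ge0 ?(ltW p0).
Qed.

Lemma poweR_scaled_le (Dl X Y : \bar R) (r alpha p : R) :
  0 <= X -> 0 <= Y -> 0 <= Dl -> (0 < r)%R -> (0 < alpha < 1)%R -> (0 < p)%R ->
  Dl <= X + X + r%:E * Y ->
  poweR (Dl * ((r `^ alpha)^-1)%:E) p
    <= (8 `^ p)%:E * (poweR (X * (((2 * r) `^ alpha)^-1)%:E) p
                     + poweR (((2 * r) `^ (1 - alpha))%:E * Y) p).
Proof.
move=> X0 Y0 Dl0 r0 alpha_itv p0 hDl.
have ka0 : (0 < ((2 * r) `^ alpha)^-1)%R by rewrite invr_gt0 powR_gt0 ?mulr_gt0.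
have kb0 : (0 < (2 * r) `^ (1 - alpha))%R by rewrite powR_gt0 ?mulr_gt0.
have pn0 : p != 0%R by rewrite gt_eqF.
case: X X0 hDl => [x| |] //= x0 hDl; last first.
  rewrite gt0_mulye ?lte_fin // poweRyr // addye; last first.
    by rewrite -ltNye (lt_le_trans _ (poweR_ge0 _ _)).
  by rewrite gt0_muley ?lte_fin ?leey.
case: Y Y0 hDl => [y| |] //= y0 hDl; last first.
  rewrite gt0_muley ?lte_fin // poweRyr // addey; last by [].
  by rewrite gt0_muley ?lte_fin ?leey.
case: Dl Dl0 hDl => [dl| |] //= dl0; rewrite -!EFinM -!EFinD lee_fin => hdl.
by rewrite lee_fin; apply: powR_scaled_le => //; lra.
Qed.

End Powers.

Section Arc.
Context {R : realType}.
Variables (g : R -> 'rV[R]_3) (l : R).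
Hypothesis hg : arclength_arc g l.

Lemma arclength_arc_lipschitz s t : 0 <= s -> s <= t -> t <= l ->
  enorm (g t - g s) <= t - s.
Proof.
case: hg => _ _ hlen s0 st tl; rewrite -lee_fin -(hlen s t s0 st tl).
apply: ereal_sup_ubound => /=.
exists 1%N, (fun k => if k is 0%N then s else t); split => //.
  by case.
by rewrite big_ord1.
Qed.

Definition clamp (s : R) : R := Num.min l (Num.max 0 s).

Lemma clamp_id s : 0 <= s -> s <= l -> clamp s = s.
Proof. by move=> s0 sl; rewrite /clamp (max_idPr s0) (min_idPr sl). Qed.

Lemma clamp_itv s : 0 <= clamp s <= l.
Proof.
have l0 : 0 <= l by case: hg => /ltW.
by rewrite /clamp !minEle !maxEle; case: ifP; case: ifP; lra.
Qed.

Lemma clampB_itv s t : s <= t -> 0 <= clamp t - clamp s <= t - s.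
Proof.
have l0 : 0 <= l by case: hg => /ltW.
by move=> st; rewrite /clamp !minEle !maxEle; repeat case: ifP; lra.
Qed.

(* [g] continued by constants outside [0, l], so that lower semicontinuity
   arguments can be run on all of R *)
Definition extend_arc (s : R) : 'rV[R]_3 := g (clamp s).

Lemma extend_arcE s : 0 <= s <= l -> extend_arc s = g s.
Proof. by move=> /andP[s0 sl]; rewrite /extend_arc clamp_id. Qed.

Lemma extend_arc_lipschitz s t : enorm (extend_arc t - extend_arc s) <= `|t - s|.
Proof.
wlog st : s t / s <= t.
  move=> H; have [/H //|/ltW ts] := leP s t.
  by rewrite enorm_distC distrC; apply: H.
have := @clampB_itv s t st; have := clamp_itv s; have := clamp_itv t.
move=> /andP[ct0 ctl] /andP[cs0 csl] /andP[c0 cst].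
rewrite ger0_norm ?subr_ge0 //.
by apply: le_trans cst; apply: arclength_arc_lipschitz => //; lra.
Qed.

End Arc.

Section Ball_sup.
Context {R : realType}.
Notation P3 := 'rV[R]_3.
Variables (C : set P3) (h : P3 -> R) (d : R).

Definition ball_sup (M : P3) : \bar R :=
  ereal_sup [set (h N)%:E | N in oball M d `&` C].

Lemma ball_sup_ge M : 0 < d -> C M -> ((h M)%:E <= ball_sup M)%E.
Proof.
by move=> d0 CM; apply: ereal_sup_ubound; exists M => //; rewrite /oball /= subrr enorm0.
Qed.

Lemma ball_sup_ge0 M : 0 < d -> C M -> (forall N, 0 <= h N) -> (0 <= ball_sup M)%E.
Proof. by move=> d0 CM h0; apply: le_trans (ball_sup_ge M d0 CM); rewrite lee_fin. Qed.

Lemma ball_sup_le_cball M :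
  (ball_sup M <= ereal_sup [set (h N)%:E | N in cball M d `&` C])%E.
Proof.
apply: ereal_sup_le => _ [N [NM CN] <-].
by exists N => //; split => //; apply: ltW.
Qed.

Lemma ball_sup_lsc (c : R -> P3) :
  (forall s t, enorm (c t - c s) <= `|t - s|) -> lower_semicontinuous (ball_sup \o c).
Proof.
move=> c_lip s a /ereal_sup_gt [_ [N [NM CN] <-] ha].
rewrite /oball /= in NM.
exists (ball s (d - enorm (N - c s))); first by apply: nbhsx_ballx; lra.
move=> t; rewrite /ball /= => st.
apply: lt_le_trans ha _; apply: ereal_sup_ubound; exists N => //; split => //.
rewrite /oball /=.
have -> : N - c t = (N - c s) + (c s - c t) by rewrite addrA subrK.
apply: le_lt_trans (enormD _ _) _.
by have := c_lip t s; lra.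
Qed.

Lemma measurable_ball_sup (c : R -> P3) (D : set R) :
  (forall s t, enorm (c t - c s) <= `|t - s|) -> measurable D ->
  measurable_fun D (ball_sup \o c).
Proof.
move=> c_lip mD; apply: (measurable_funS measurableT) => //.
exact: lower_semicontinuous_measurable (ball_sup_lsc _ c_lip).
Qed.

End Ball_sup.

Section Mean_value.
Context {R : realType}.
Notation P3 := 'rV[R]_3.

Lemma diff_dot_grad (v : P3 -> R) x w :
  differentiable v x -> 'd v x w = dot w (grad v x).
Proof.
move=> dv.
have wE : w = w ord0 0 *: evec R 0 + w ord0 1 *: evec R 1 + w ord0 2 *: evec R 2.
  apply/rowP => j; rewrite !mxE.
  case: j => [[|[|[|j]]] hj] //=; rewrite ?mulr1 ?mulr0 ?addr0 ?add0r;
  by congr (w _ _); apply: val_inj.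
by rewrite {1}wE !(linearD ('d v x)) !(linearZ_LR ('d v x)) /= /dot /grad !mxE /partial -!deriveE.
Qed.

Lemma is_derive_along_line (v : P3 -> R) (M w : P3) (t : R) :
  differentiable v (t *: w + M) ->
  is_derive t 1 (fun s => v (s *: w + M)) ('d v (t *: w + M) w).
Proof.
move=> dv.
have shiftE (e : R) : (e%:A + t) *: w + M = e *: w + (t *: w + M).
  by rewrite [_%:A]mulr1 scalerDl addrA.
apply: DeriveDef.
  apply/derivable1P => /=; under eq_fun do rewrite shiftE.
  by apply: (proj1 (derivable1P v _ _)); exact: diff_derivable.
rewrite -deriveE // /derive; f_equal; f_equal; apply/funext => e /=.
by rewrite /shift /= shiftE.
Qed.

Lemma mean_value_grad_bound (v : P3 -> R) (M N : P3) (r : R) (B : \bar R) :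
  0 < r -> enorm (N - M) <= r ->
  (forall t, 0 <= t <= 1 -> differentiable v (t *: (N - M) + M)) ->
  (forall P, enorm (P - M) < r -> ((enorm (grad v P))%:E <= B)%E) ->
  ((`|v N - v M|)%:E <= r%:E * B)%E.
Proof.
move=> r0 NM dv gradB.
have oitv (x : R) : x \in `]0, 1[ -> 0 <= x <= 1.
  by rewrite in_itv /= => /andP[h1 h2]; rewrite !ltW.
have cont : {within `[0, 1], continuous (fun s => v (s *: (N - M) + M))}.
  apply: derivable_within_continuous => x; rewrite in_itv /= => x01.
  by case: (is_derive_along_line _ _ _ _ (dv x x01)).
have [c c01 +] := MVT ltr01 (fun x x01 => is_derive_along_line _ _ _ _ (dv x (oitv x x01))) cont.
rewrite scale1r scale0r add0r subrK subr0 mulr1 => ->.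
have /andP[c0 _] := oitv c c01.
rewrite diff_dot_grad; last exact/dv/oitv.
set P := c *: (N - M) + M.
have PM : enorm (P - M) < r.
  rewrite /P addrK enormZ ger0_norm //.
  move: c01; rewrite in_itv /= => /andP[_ c_lt1].
  by have := enorm_ge0 (N - M); nra.
apply: (@le_trans _ _ (r%:E * (enorm (grad v P))%:E)%E); last first.
  by apply: lee_wpmul2l; [rewrite lee_fin ltW | exact: gradB].
rewrite -EFinM lee_fin; apply: le_trans (cauchy_schwarz _ _) _.
by apply: ler_wpM2r; rewrite ?enorm_ge0.
Qed.

End Mean_value.

Section Delta_star_estimate.
Context {R : realType}.
Notation P3 := 'rV[R]_3.
Variables (g : R -> P3) (l : R) (f v : P3 -> R) (r : R).
Hypotheses (hg : arclength_arc g l) (r0 : 0 < r)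
  (hv : harmonic_on (Omega g l (2 * r)) v).

Local Notation A := (ball_sup (curve g l) (fun N => `|f N - v N|) (2 * r)).
Local Notation B := (ball_sup setT (fun N => enorm (grad v N)) r).

Lemma Delta_star_le_ball_sup M : curve g l M ->
  (Delta_star g l f M r <= A M + A M + r%:E * B M)%E.
Proof.
move=> LM; apply: ge_ereal_sup => _ [N [NM LN] <-]; rewrite /cball /= in NM.
have FN : ((`|f N - v N|)%:E <= A M)%E.
  apply: ereal_sup_ubound; exists N => //; split => //.
  by rewrite /oball /= (le_lt_trans NM) // ltr_pMl // ltr1n.
have FM : ((`|f M - v M|)%:E <= A M)%E by apply: ball_sup_ge; rewrite ?mulr_gt0.
have dvNM : ((`|v N - v M|)%:E <= r%:E * B M)%E.
  apply: mean_value_grad_bound => // [t /andP[t0 t1]|P PM].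
  - case: hv => hdiff _ _ _; apply: hdiff; exists M => //.
    rewrite /oball /= addrK enormZ ger0_norm //.
    by have := enorm_ge0 (N - M); have := r0; nra.
  - by apply: ereal_sup_ubound; exists P.
apply: le_trans (leeD (leeD FN FM) dvNM); rewrite -!EFinD lee_fin.
have -> : f N - f M = (f N - v N) - (f M - v M) + (v N - v M) by ring.
by apply: le_trans (ler_normD _ _) _; rewrite lerD2r ler_normB.
Qed.

Lemma ball_sup_le_max_delta M :
  (A M <= max_delta g l (2 * r) (fun N => (f N - v N)%R) M)%E.
Proof. exact: ball_sup_le_cball. Qed.

Lemma ball_sup_le_grad_star M : (B M <= grad_star (2 * r) v M)%E.
Proof.
rewrite /grad_star.
have -> : 2 * r / 2 = r by rewrite mulrC mulKf ?pnatr_eq0.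
by rewrite -[cball M r]setIT; apply: ball_sup_le_cball.
Qed.

Lemma Delta_star_ge0 M : curve g l M -> (0 <= Delta_star g l f M r)%E.
Proof.
move=> LM; apply: le_trans (ereal_sup_ubound _); last first.
  by exists M => //; split => //; rewrite /cball /= subrr enorm0 ltW.
by rewrite subrr normr0.
Qed.

Lemma int_Delta_star_le alpha p : 0 < alpha < 1 -> 0 < p ->
  (int_L g l (fun M => poweR (Delta_star g l f M r * ((r `^ alpha)^-1)%:E) p)
   <= (8 `^ p)%:E *
      (int_L g l (fun M => poweR (max_delta g l (2 * r) (fun N => (f N - v N)%R) M
                                  * (((2 * r) `^ alpha)^-1)%:E) p)
       + int_L g l (fun M => poweR (((2 * r) `^ (1 - alpha))%:E
                                    * grad_star (2 * r) v M) p)))%E.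
Proof.
move=> alpha_itv p0.
have r2 : 0 < 2 * r by rewrite mulr_gt0.
set D := `[0%R, l]%classic; have mD : measurable D := measurable_itv _.
set ka := ((2 * r) `^ alpha)^-1; set kb := (2 * r) `^ (1 - alpha).
have ka0 : 0 <= ka by rewrite invr_ge0 powR_ge0.
have kb0 : 0 <= kb by rewrite powR_ge0.
pose X s := poweR (A (extend_arc g l s) * ka%:E) p.
pose Y s := poweR (kb%:E * B (extend_arc g l s)) p.
have Lg s : D s -> curve g l (g s) by exists s.
have gE s : D s -> extend_arc g l s = g s by rewrite /D /= in_itv; exact: extend_arcE.
have A0 s : D s -> (0 <= A (g s))%E by move=> /Lg Ls; apply: ball_sup_ge0.
have B0 s : D s -> (0 <= B (g s))%E by move=> _; apply: ball_sup_ge0 => // N; exact: enorm_ge0.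
have mball C h d : measurable_fun D (ball_sup C h d \o extend_arc g l).
  by apply: measurable_ball_sup => //; exact: extend_arc_lipschitz.
have mX : measurable_fun D X.
  apply: measurableT_comp (measurable_poweR _) _.
  by under eq_fun do rewrite muleC; exact: measurable_funeM (mball _ _ _).
have mY : measurable_fun D Y.
  exact: measurableT_comp (measurable_poweR _) (measurable_funeM _ (mball _ _ _)).
have X0 s : D s -> (0 <= X s)%E by move=> _; exact: poweR_ge0.
have Y0 s : D s -> (0 <= Y s)%E by move=> _; exact: poweR_ge0.
apply: (@le_trans _ _ (\int[lebesgue_measure]_(s in D) ((8 `^ p)%:E * (X s + Y s)))%E).
  apply: ge0_le_integral_nonmeas => s Ds; first exact: poweR_ge0.
  have Ls := Lg s Ds.
  rewrite /X /Y gE //; apply: poweR_scaled_le; rewrite ?A0 ?B0 ?Delta_star_ge0 //.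
  exact: Delta_star_le_ball_sup.
have p80 : (0 <= (8 `^ p)%:E)%E by rewrite lee_fin powR_ge0.
have XY0 s : D s -> (0 <= X s + Y s)%E by move=> Ds; rewrite adde_ge0 ?X0 ?Y0.
have := ge0_integralZl lebesgue_measure mD (emeasurable_funD mX mY) XY0 p80.
rewrite /= => ->; rewrite ge0_integralD //; apply: lee_wpmul2l => //.
apply: leeD; apply: ge0_le_integral_nonmeas => s Ds; rewrite ?poweR_ge0 //.
- rewrite /X gE //; apply: lee_poweR; rewrite ?(ltW p0) ?mule_ge0 ?A0 //.
  by apply: lee_wpmul2r; rewrite ?lee_fin // ball_sup_le_max_delta.
- rewrite /Y gE //; apply: lee_poweR; rewrite ?(ltW p0) ?mule_ge0 ?B0 //.
  by apply: lee_wpmul2l; rewrite ?lee_fin // ball_sup_le_grad_star.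
Qed.

End Delta_star_estimate.
Arguments int_Delta_star_le {R g l f v r}.

Theorem theorem2 (R : realType) (g : R -> 'rV[R]_3) (l b alpha p : R)
    (f : 'rV[R]_3 -> R) :
  arclength_arc g l -> 1 <= b -> chord_arc g l b ->
  0 < alpha -> alpha < 1 -> alpha^-1 < p ->
  {within curve g l, continuous f} ->
  (exists c : R, 0 < c /\
     forall d : R, 0 < d -> d <= 2 * l ->
       exists v : 'rV[R]_3 -> R,
         [/\ harmonic_on (Omega g l d) v,
             (poweR (int_L g l (fun M =>
                 poweR (max_delta g l d (fun N => (f N - v N)%R) M
                        * ((d `^ alpha)^-1)%R%:E) p)) p^-1%R <= c%:E)%E &
             (poweR (int_L g l (fun M =>
                 poweR ((d `^ (1 - alpha))%R%:E * grad_star d v M) p)) p^-1%R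
               <= c%:E)%E]) ->
  Lambda g l alpha p f.
Proof.
move=> hg _ _ a0 a1 ap _ [c [_ hyp]].
have a01 : 0 < alpha < 1 by rewrite a0 a1.
have p0 : 0 < p by apply: lt_trans ap; rewrite invr_gt0.
set K := 8 `^ p * (c `^ p + c `^ p).
apply: (@le_lt_trans _ _ (K `^ p^-1)%:E); last exact: ltry.
apply: ge_ereal_sup => _ [r + <-]; rewrite /= in_itv /= => /andP[r0 rl].
have [v [hv maxB gradB]] := hyp (2 * r) ltac:(lra) ltac:(lra).
rewrite -poweR_EFin; apply: lee_poweR; rewrite ?invr_ge0 ?(ltW p0) ?integral_ge0 //.
  by move=> s _; exact: poweR_ge0.
apply: le_trans (int_Delta_star_le hg r0 hv _ _ a01 p0) _.
rewrite /K EFinM EFinD; apply: lee_wpmul2l; first by rewrite lee_fin powR_ge0.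
by apply: leeD; apply: poweRV_le_powR; rewrite ?integral_ge0 // => s _; exact: poweR_ge0.
Qed.
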